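(* Let $G=K(n_1,\dots,n_s)$ be a complete $s$-partite graph with parts $V_1,\dots,V_s$, $|V_j|=n_j$, $n_1\ge n_2\ge\cdots\ge n_s$, and $n_j\le 5$ for all $j$. Suppose $G$ has at least two parts with at least $3$ vertices. Then there is an optimal $3$-relaxed coloring of $G$ which assigns the same color to three vertices of $V_1$ and three vertices of $V_2$.
   Context: A map $f$ from $V(G)$ to a finite set of colors is a $3$-relaxed coloring if every vertex $u$ has at most $3$ neighbors $v$ with $f(v)=f(u)$; it is optimal if it uses the minimum possible number $\chi_3(G)$ of colors. *)

From mathcomp Require Import all_boot.
Set Implicit Arguments. Unset Strict Implicit. Unset Printing Implicit Defensive.

Definition relaxed3 (T : finType) (e : rel T) (C : eqType) (f : T -> C) : Prop :=
  forall u : T, #|[pred v | e u v && (f v == f u)]| <= 3.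

Definition colorable3 (T : finType) (e : rel T) (k : nat) : Prop :=
  exists f : T -> 'I_k, relaxed3 e f.

Definition optimal3 (T : finType) (e : rel T) (k : nat) (f : T -> 'I_k) : Prop :=
  relaxed3 e f /\ forall k', colorable3 e k' -> k <= k'.

(* The complete s-partite graph K(n_1,...,n_s): vertices are pairs (j, i)
   with j : 'I_s the part and i : 'I_(n j) the index within part j;
   two vertices are adjacent iff they lie in different parts. *)
Definition Kvtx (s : nat) (n : 'I_s -> nat) : finType := {j : 'I_s & 'I_(n j)}.

Definition Kadj (s : nat) (n : 'I_s -> nat) : rel (Kvtx n) :=
  fun x y => tag x != tag y.

From mathcomp Require Import all_boot fingroup perm zify.
From Stdlib Require Import Classical.
Set Implicit Arguments. Unset Strict Implicit. Unset Printing Implicit Defensive.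

(* The neighbours of a vertex of K(n_1,...,n_s) are the vertices outside its
   part, so a set is a colour class of a 3-relaxed colouring iff each of its
   vertices has at most 3 of its elements outside its own part.
   Start from an optimal colouring.  Without new colours, and changing only
   colours that occur on V_1, one can make some class consist of 3 vertices of
   V_1 plus at most 3 vertices lying in a single part; this is a case analysis
   on the largest number of vertices of V_1 sharing a colour (at least 3,
   exactly 2, at most 1), using a few recolourings and colour swaps, and
   |V_j| <= 5 bounds a remainder lying in V_1 itself.  If this class meets V_2,
   enlarge its remainder to 3 vertices of V_2.  Otherwise anchor a class at V_2
   in the same way, which leaves the first class alone, and exchange the
   remainder of the first class with the 3 anchor vertices in V_2: one class
   becomes 3 + 3 vertices in V_1 and V_2, the other two remainders of at most
   3 vertices, each inside one part. *)

Section Subsets.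
Variable T : finType.
Implicit Types A B C : {set T}.

Lemma subset_of_card B m : m <= #|B| -> exists2 C : {set T}, C \subset B & #|C| = m.
Proof.
rewrite -bin_gt0 -cards_draws => /card_gt0P[C].
by rewrite inE => /andP[sCB /eqP]; exists C.
Qed.

Lemma subset_extension A B m : A \subset B -> #|A| <= m <= #|B| ->
  exists C : {set T}, [/\ A \subset C, C \subset B & #|C| = m].
Proof.
move=> sAB /andP[leAm lemB].
have [C sC cardC] : exists2 C : {set T}, C \subset B :\: A & #|C| = m - #|A|.
  by apply: subset_of_card; rewrite cardsD (setIidPr sAB); lia.
have [sCB dAC] : C \subset B /\ [disjoint A & C].
  by rewrite subsetD in sC; case/andP: sC; rewrite disjoint_sym.
exists (A :|: C); split; first exact: subsetUl.
  by rewrite subUset sAB.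
by rewrite cardsU (disjoint_setI0 dAC) cards0 cardC; lia.
Qed.

End Subsets.

Section CompleteMultipartite.
Variables (s : nat) (n : 'I_s -> nat).
Hypothesis n_le5 : forall j, n j <= 5.
Local Notation T := (Kvtx n).
Implicit Types (S A B D : {set T}) (i j p : 'I_s).

Definition part j : {set T} := [set v | tag v == j].

Lemma card_part j : #|part j| = n j.
Proof.
have -> : part j = [set Tagged (fun j => 'I_(n j)) i | i in 'I_(n j)].
  apply/setP => v; rewrite inE; apply/eqP/imsetP => [|[i _ ->//]].
  by case: v => j' i /= <-; exists i.
by rewrite card_imset ?card_ord // => x y; apply: eq_from_Tagged.
Qed.

Definition relaxed_set S := forall u, u \in S -> #|S :\: part (tag u)| <= 3.

Lemma relaxed_subset S S' : S \subset S' -> relaxed_set S' -> relaxed_set S.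
Proof.
move=> sSS' rS' u uS; apply: leq_trans (rS' u (subsetP sSS' u uS)).
by apply: subset_leq_card; apply: setSD.
Qed.

Lemma relaxed_small S : #|S| <= 4 -> relaxed_set S.
Proof.
move=> S4 u uS; have: S :\: part (tag u) \subset S :\ u.
  by apply: setDS; rewrite sub1set inE.
by move/subset_leq_card; rewrite (cardsD1 u S) uS in S4; lia.
Qed.

Lemma relaxed_two_parts S A B p q : S \subset A :|: B ->
  A \subset part p -> B \subset part q -> #|A| <= 3 -> #|B| <= 3 ->
  relaxed_set S.
Proof.
move=> sSAB sAp sBq A3 B3 u uS.
have far_in (X : {set T}) r :
    X \subset part r -> u \in X -> S :\: part (tag u) \subset S :\: X.
  move=> sXr uX; apply: setDS; apply/subsetP => v vX.
  by have := subsetP sXr v vX; have := subsetP sXr u uX; rewrite !inE => /eqP-> /eqP->.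
have [uA|uB] : u \in A \/ u \in B by apply/orP; rewrite -in_setU (subsetP sSAB).
- apply: leq_trans B3; apply: subset_leq_card; apply: subset_trans (far_in _ _ sAp uA) _.
  by rewrite subDset.
- apply: leq_trans A3; apply: subset_leq_card; apply: subset_trans (far_in _ _ sBq uB) _.
  by rewrite subDset setUC.
Qed.

Lemma relaxed_off_part S j u : relaxed_set S -> u \in S :&: part j ->
  #|S :\: part j| <= 3.
Proof. by move=> rS; rewrite inE => /andP[uS]; rewrite inE => /eqP <-; apply: rS. Qed.

Lemma small_in_part j S : #|S| <= 1 -> exists p, S \subset part p.
Proof.
case: (set_0Vmem S) => [->|[u uS] /card_le1P S1]; first by exists j; rewrite sub0set.
by exists (tag u); apply/subsetP => v; rewrite (S1 u uS v) inE => /eqP->; rewrite inE.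
Qed.

Lemma rest_in_one_part S D j : relaxed_set S -> D \subset S :&: part j ->
  #|D| = 3 -> exists p, S :\: D \subset part p.
Proof.
move=> rS; rewrite subsetI => /andP[sDS sDj] D3.
have [/exists_inP[x xR xj] | /exists_inPn allj] := boolP [exists x in S :\: D, tag x != j].
- exists (tag x); apply/subsetP => v vR; rewrite inE; apply/negPn/negP => vx.
  have : v |: D \subset S :\: part (tag x).
    rewrite subUset sub1set !inE vx (setDP vR).1 /=; apply/subsetP => d dD.
    have := subsetP sDj d dD; rewrite !inE (subsetP sDS d dD) andbT => /eqP->.
    by rewrite eq_sym.
  move/subset_leq_card; rewrite cardsU1 D3 (setDP vR).2.
  by have := rS x (setDP xR).1; lia.
- by exists j; apply/subsetP => v vR; have := allj v vR; rewrite negbK inE.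
Qed.

Lemma rest_card S D j p : relaxed_set S -> D \subset S :&: part j ->
  #|D| = 3 -> S :\: D \subset part p -> #|S :\: D| <= 3.
Proof.
move=> rS sD D3 sRp; have sDj : D \subset part j by rewrite subsetI in sD; case/andP: sD.
have [d dD] : exists d, d \in D by apply/card_gt0P; rewrite D3.
have [epj | npj] := eqVneq p j.
- subst p; have : S :\: D \subset part j :\: D.
    by apply/subsetP => v vR; rewrite in_setD (subsetP sRp v vR) (setDP vR).2.
  move/subset_leq_card; rewrite [#|part j :\: D|]cardsD (setIidPr sDj) card_part D3.
  by have := n_le5 j; lia.
- apply: leq_trans (relaxed_off_part rS (subsetP sD d dD)).
  apply: subset_leq_card; apply/subsetP => v vR; rewrite in_setD (setDP vR).1 andbT.
  by have := subsetP sRp v vR; rewrite !inE => /eqP->.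
Qed.

Lemma off_part_in_one_part S j : relaxed_set S -> 2 <= #|S :&: part j| ->
  3 <= #|S :\: part j| -> exists p, S :\: part j \subset part p.
Proof.
move=> rS Q2; set R := S :\: part j => R3.
have far x : x \in R -> #|R :\: part (tag x)| <= 1.
  move=> xR; have [xS xj] := setDP xR.
  have -> : R :\: part (tag x) = (S :\: part (tag x)) :\: part j by rewrite !setDDl setUC.
  have : S :&: part j \subset (S :\: part (tag x)) :&: part j.
    apply/subsetP => v; rewrite !inE => /andP[vS /eqP vj]; rewrite vS vj eqxx !andbT.
    by rewrite inE in xj; rewrite eq_sym.
  move/subset_leq_card; have := cardsID (part j) (S :\: part (tag x)).
  by have := rS x xS; lia.
have [x xR] : exists x, x \in R by apply/card_gt0P; lia.
clearbody R; exists (tag x); apply/subsetP => v vR; rewrite inE; apply/negPn/negP => nvx.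
have : R \subset (R :\: part (tag x)) :|: (R :\: part (tag v)).
  apply/subsetP => w wR; rewrite !inE wR !andbT -negb_and.
  by apply: contra nvx => /andP[/eqP <- /eqP ->].
move/subset_leq_card; rewrite cardsU; have := far x xR; have := far v vR; lia.
Qed.

Definition anchored j D S :=
  [/\ D \subset S :&: part j, #|D| = 3 & exists p, S :\: D \subset part p].

Section Colourings.
Variable k : nat.
Implicit Types (f g h : T -> 'I_k) (c d : 'I_k) (F : {set 'I_k}).

Definition cclass f c : {set T} := [set v | f v == c].

Definition relaxed_coloring f := forall c, relaxed_set (cclass f c).

Lemma relaxed3_Kadj f : relaxed3 (@Kadj s n) f <-> relaxed_coloring f.
Proof.
have e u : #|[pred v | Kadj u v && (f v == f u)]| = #|cclass f (f u) :\: part (tag u)|.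
  by apply: eq_card => v; rewrite !inE /Kadj (eq_sym (tag u)).
split=> [rf c u | rf u]; last by rewrite e; apply: rf; rewrite inE.
by rewrite inE => /eqP <-; rewrite -e.
Qed.

Lemma relaxed_coloring_of f g : relaxed_coloring f ->
  (forall c, cclass g c \subset cclass f c \/ relaxed_set (cclass g c)) ->
  relaxed_coloring g.
Proof. by move=> rf hg c; case: (hg c) => // sub; apply: relaxed_subset sub (rf c). Qed.

Definition recolor f A c : T -> 'I_k := fun v => if v \in A then c else f v.

Lemma cclass_recolor f A c : cclass (recolor f A c) c = A :|: cclass f c.
Proof. by apply/setP => v; rewrite !inE /recolor; case: (v \in A); rewrite ?eqxx. Qed.

Lemma cclass_recolor_ne f A c d : d != c ->
  cclass (recolor f A c) d = cclass f d :\: A.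
Proof.
move=> dc; apply/setP => v; rewrite !inE /recolor.
by case: (v \in A); rewrite // eq_sym (negbTE dc).
Qed.

Lemma relaxed_recolor f A c : relaxed_coloring f ->
  relaxed_set (A :|: cclass f c) -> relaxed_coloring (recolor f A c).
Proof.
move=> rf rc; apply: relaxed_coloring_of rf _ => d.
have [-> | dc] := eqVneq d c; first by right; rewrite cclass_recolor.
by left; rewrite cclass_recolor_ne // subsetDl.
Qed.

Definition swap f x u : T -> 'I_k := fun v => f (tperm x u v).

Lemma swapL f x u : swap f x u x = f u.
Proof. by rewrite /swap tpermL. Qed.

Lemma swapR f x u : swap f x u u = f x.
Proof. by rewrite /swap tpermR. Qed.

Lemma swapD f x u w : w != x -> w != u -> swap f x u w = f w.
Proof. by move=> wx wu; rewrite /swap tpermD // eq_sym. Qed.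

Lemma cclass_swap f x u : f x != f u ->
  cclass (swap f x u) (f x) = u |: (cclass f (f x) :\ x).
Proof.
move=> ne; have xu : x != u by apply: contraNneq ne => ->.
apply/setP => w; rewrite !inE.
have [-> | wx] := eqVneq w x; first by rewrite swapL eq_sym (negbTE ne) (negbTE xu).
have [-> | wu] := eqVneq w u; first by rewrite swapR !eqxx.
by rewrite swapD.
Qed.

Lemma card_cclass_swap f x u c : #|cclass (swap f x u) c| = #|cclass f c|.
Proof.
have -> : cclass (swap f x u) c = tperm x u @^-1: cclass f c by apply/setP => v; rewrite !inE.
by rewrite card_preimset //; exact: perm_inj.
Qed.

Lemma relaxed_swap f x u : relaxed_coloring f ->
  #|cclass f (f x)| <= 4 -> #|cclass f (f u)| <= 4 -> relaxed_coloring (swap f x u).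
Proof.
move=> rf x4 u4; apply: relaxed_coloring_of rf _ => c.
have [cxu | ] := boolP ((c == f x) || (c == f u)).
  by right; apply: relaxed_small; rewrite card_cclass_swap; case/orP: cxu => /eqP->.
rewrite negb_or => /andP[cx cu]; left; apply/subsetP => v; rewrite !inE /swap.
case: tpermP => [_ /eqP fc | _ /eqP fc | // ]; first by rewrite fc eqxx in cu.
by rewrite fc eqxx in cx.
Qed.

Definition recolors_within F f g := forall v, g v != f v -> f v \in F /\ g v \in F.

Lemma recolors_within_trans F f g h :
  recolors_within F f g -> recolors_within F g h -> recolors_within F f h.
Proof.
move=> wfg wgh v hf; have [e | ne] := eqVneq (g v) (f v).
  by rewrite -e in hf *; exact: wgh.
have [fF gF] := wfg v ne; split => //.
by have [-> // | ne'] := eqVneq (h v) (g v); exact: (wgh v ne').2.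
Qed.

Lemma recolor_within F f A c : c \in F -> {in A, forall v, f v \in F} ->
  recolors_within F f (recolor f A c).
Proof. by move=> cF AF v; rewrite /recolor; case: ifP => [/AF | _]; rewrite ?eqxx. Qed.

Lemma swap_within F f x u : f x \in F -> f u \in F -> recolors_within F f (swap f x u).
Proof. by move=> xF uF v; rewrite /swap; case: tpermP => [-> | -> | _ _]; rewrite ?eqxx. Qed.

Lemma cclass_within F f g c : recolors_within F f g -> c \notin F ->
  cclass g c = cclass f c.
Proof.
move=> w cF; apply/setP => v; rewrite !inE.
have [-> // | /w[fF gF]] := eqVneq (g v) (f v).
have gc : g v != c by apply: contraNneq cF => <-.
have fc : f v != c by apply: contraNneq cF => <-.
by rewrite (negbTE gc) (negbTE fc).
Qed.

Lemma recolors_within_part (P : {set T}) f g v : recolors_within (f @: P) f g -> v \in P ->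
  g v \in f @: P.
Proof.
move=> w vP; have [-> | /w[]//] := eqVneq (g v) (f v).
exact: imset_f.
Qed.

(* Recolouring only within the colours of part [j] guarantees that anchoring a
   second part leaves an anchored class of any other colour untouched. *)
Definition anchoring j f g := [/\ relaxed_coloring g, recolors_within (f @: part j) f g
  & exists c D, anchored j D (cclass g c)].

Section Anchoring.
Variables (f : T -> 'I_k) (j : 'I_s).
Hypotheses (f_relaxed : relaxed_coloring f) (nj : 3 <= n j).
Arguments f_relaxed : clear implicits.
Local Notation F := (f @: part j).

Lemma colour_of_part c q : q \in cclass f c :&: part j -> c \in F.
Proof. by case/setIP; rewrite inE => /eqP <- qj; apply: imset_f. Qed.

Lemma anchoring_big c : 3 <= #|cclass f c :&: part j| -> anchoring j f f.
Proof.
move=> Q3; have [D sD D3] := subset_of_card Q3.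
have [p sRp] := rest_in_one_part (f_relaxed c) sD D3.
split => //; last by exists c, D; split => //; exists p.
by move=> v; rewrite eqxx.
Qed.

Lemma exists_other_colour c : #|cclass f c :&: part j| < n j ->
  exists2 v, v \in part j & f v != c.
Proof.
rewrite -card_part => lt.
have /subsetPn[v vj vQ] : ~~ (part j \subset cclass f c :&: part j).
  by apply: contraTN lt => /subset_leq_card; rewrite -leqNgt.
by exists v => //; apply: contra vQ => fvc; rewrite inE vj andbT inE.
Qed.

Lemma anchoring_pair_one_part c v p : #|cclass f c :&: part j| = 2 ->
  v \in part j -> f v != c -> cclass f c :\: part j \subset part p ->
  anchoring j f (recolor f [set v] c).
Proof.
move=> Q2 vj vc sRp; set Q := cclass f c :&: part j.
have [q qQ] : exists q, q \in Q by apply/card_gt0P; rewrite Q2.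
have D3 : #|v |: Q| = 3 by rewrite cardsU1 Q2 !inE (negbTE vc).
have sDj : v |: Q \subset part j by rewrite subUset sub1set vj subsetIr.
have class_c : cclass (recolor f [set v] c) c = (v |: Q) :|: (cclass f c :\: part j).
  by rewrite cclass_recolor -setUA setID.
split.
- apply: relaxed_recolor => //; rewrite -cclass_recolor class_c.
  apply: (relaxed_two_parts (subxx _) sDj sRp); first by rewrite D3.
  exact: relaxed_off_part (f_relaxed c) qQ.
- apply: recolor_within => [|w]; first exact: colour_of_part qQ.
  by rewrite inE => /eqP->; apply: imset_f.
- exists c, (v |: Q); split => //; first by rewrite subsetI sDj class_c subsetUl.
  by exists p; apply: subset_trans sRp; rewrite class_c subDset subxx.
Qed.

Lemma anchoring_pair_swap c v y : #|cclass f c :&: part j| = 2 ->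
  #|cclass f c :\: part j| <= 2 -> y \in cclass f c :\: part j ->
  v \in part j -> f v != c -> #|cclass f (f v) :\ v| <= 3 ->
  anchoring j f (swap f y v).
Proof.
move=> Q2 R2 yR vj vc Lv; set Q := cclass f c :&: part j.
have [q qQ] : exists q, q \in Q by apply/card_gt0P; rewrite Q2.
have [ycls yj] := setDP yR; have fy : f y = c by move: ycls; rewrite inE => /eqP.
have D3 : #|v |: Q| = 3 by rewrite cardsU1 Q2 !inE (negbTE vc).
have sDj : v |: Q \subset part j by rewrite subUset sub1set vj subsetIr.
have R1 : #|(cclass f c :\: part j) :\ y| <= 1 by move: R2; rewrite (cardsD1 y) yR.
split.
- apply: relaxed_swap => //.
    by rewrite fy -(cardsID (part j) (cclass f c)) Q2; lia.
  by rewrite (cardsD1 v) [v \in _]inE eqxx; lia.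
- by apply: swap_within; [rewrite fy; apply: colour_of_part qQ | apply: imset_f].
- exists c, (v |: Q); split => //.
    rewrite subsetI sDj andbT; apply/subsetP => w.
    rewrite !inE => /orP[/eqP-> | /andP[/eqP fw wj]].
      by rewrite swapR fy.
    rewrite swapD ?fw //; last by apply: contraNneq vc => <-; rewrite fw.
    by apply: contraNneq yj => <-; rewrite inE.
  have [p sp] := small_in_part j R1; exists p; apply: subset_trans sp.
  apply/subsetP => w; rewrite in_setD in_setU1 negb_or inE => /andP[/andP[wv wQ] fw].
  have wy : w != y by apply: contraTneq fw => ->; rewrite inE swapL.
  by move: fw wQ; rewrite inE swapD // => fw; rewrite !inE fw wy andbT.
Qed.

Lemma anchoring_pair c : #|cclass f c :&: part j| = 2 ->
  (forall d, #|cclass f d :&: part j| <= 2) -> exists g, anchoring j f g.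
Proof.
move=> Q2 le2.
have [v vj vc] : exists2 v, v \in part j & f v != c by apply: exists_other_colour; rewrite Q2.
have [/existsP[p sRp] | mixed] := boolP [exists p, cclass f c :\: part j \subset part p].
  by exists (recolor f [set v] c); apply: anchoring_pair_one_part sRp.
have R2 : #|cclass f c :\: part j| <= 2.
  rewrite leqNgt; apply: contra mixed => R3; apply/existsP.
  by have [p ?] := off_part_in_one_part (f_relaxed c) (eq_leq (esym Q2)) R3; exists p.
have [y yR] : exists y, y \in cclass f c :\: part j.
  apply/set0Pn; apply: contra mixed => /eqP->; apply/existsP.
  by exists j; apply: sub0set.
have [Lv | Lv] := leqP #|cclass f (f v) :\ v| 3.
  by exists (swap f y v); apply: anchoring_pair_swap yR vj vc Lv.
(* Otherwise the class of [f v] meets part [j] twice and has three vertices elsewhere. *)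
have vQ : v \in cclass f (f v) :&: part j by rewrite in_setI vj andbT inE.
have Rv3 := relaxed_off_part (f_relaxed (f v)) vQ.
have [Qv2 Rv3'] : #|cclass f (f v) :&: part j| = 2 /\ 3 <= #|cclass f (f v) :\: part j|.
  have := cardsID (part j) (cclass f (f v)); have := cardsD1 v (cclass f (f v)).
  by rewrite [v \in cclass _ _]inE eqxx; have := le2 (f v); lia.
have [p sRp] := off_part_in_one_part (f_relaxed (f v)) (eq_leq (esym Qv2)) Rv3'.
have [w wj wv] : exists2 w, w \in part j & f w != f v.
  by apply: exists_other_colour; rewrite Qv2.
by exists (recolor f [set w] (f v)); apply: anchoring_pair_one_part sRp.
Qed.

Lemma anchoring_rainbow_small u1 u2 u3 :
  [/\ u1 \in part j, u2 \in part j & u3 \in part j] ->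
  [/\ u1 != u2, u2 != u3 & u3 != u1] -> #|cclass f (f u1) :\ u1| <= 1 ->
  anchoring j f (recolor f [set u2; u3] (f u1)).
Proof.
move=> [u1j u2j u3j] [n12 n23 n31] L1; set D := u1 |: [set u2; u3].
have D3 : #|D| = 3 by rewrite cardsU1 cards2 !inE negb_or n12 n23 (eq_sym u1 u3) n31.
have sDj : D \subset part j by rewrite !subUset !sub1set u1j u2j u3j.
have u1c : u1 \in cclass f (f u1) by rewrite inE.
have class1 : cclass (recolor f [set u2; u3] (f u1)) (f u1) = D :|: (cclass f (f u1) :\ u1).
  by rewrite cclass_recolor -{1}(setD1K u1c) setUCA setUA.
split.
- apply: relaxed_recolor => //; rewrite -cclass_recolor class1.
  by apply: relaxed_small; rewrite cardsU D3; lia.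
- apply: recolor_within; first exact: imset_f.
  by move=> w; rewrite !inE => /orP[]/eqP->; apply: imset_f.
- exists (f u1), D; split => //; first by rewrite subsetI sDj class1 subsetUl.
  have [p sp] := small_in_part j L1; exists p; apply: subset_trans sp.
  by rewrite class1 subDset subxx.
Qed.

Lemma anchoring_rainbow_swaps u1 u2 u3 x y :
  [/\ u1 \in part j, u2 \in part j & u3 \in part j] ->
  [/\ f u1 != f u2, f u2 != f u3 & f u3 != f u1] ->
  (forall u, u \in part j -> #|cclass f (f u) :\ u| <= 3) ->
  x \in cclass f (f u1) :\ u1 -> y \in cclass f (f u1) :\ u1 -> x != y ->
  anchoring j f (swap (swap f x u2) y u3).
Proof.
move=> [u1j u2j u3j] [c12 c23 c31] rest3 xR yR xy.
have [xu1 /[1!inE]/eqP fx] := setD1P xR; have [yu1 /[1!inE]/eqP fy] := setD1P yR.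
have card4 u : u \in part j -> #|cclass f (f u)| <= 4.
  by move=> uj; rewrite (cardsD1 u) [u \in _]inE eqxx; have := rest3 u uj; lia.
have neq a b : f a != f b -> a != b by move=> ne; apply: contraNneq ne => ->.
have [xu2 xu3 yu2 yu3] : [/\ x != u2, x != u3, y != u2 & y != u3].
  by split; apply: neq; rewrite ?fx ?fy // eq_sym.
have [u1u2 u1u3 u2u3] : [/\ u1 != u2, u1 != u3 & u2 != u3].
  by split; apply: neq; rewrite // eq_sym.
have gy : swap f x u2 y = f u1 by rewrite swapD // eq_sym.
have gu3 : swap f x u2 u3 = f u3 by rewrite swapD // eq_sym.
have rg : relaxed_coloring (swap f x u2).
  by apply: relaxed_swap => //; rewrite ?fx; apply: card4.
have class_g : cclass (swap f x u2) (f u1) = u2 |: (cclass f (f u1) :\ x).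
  by rewrite -{1}fx cclass_swap fx.
have class_h :
    cclass (swap (swap f x u2) y u3) (f u1) = u3 |: ((u2 |: (cclass f (f u1) :\ x)) :\ y).
  by rewrite -{1}gy cclass_swap gy ?gu3 1?eq_sym // class_g.
split.
- by apply: relaxed_swap => //; rewrite ?gy ?gu3 card_cclass_swap; apply: card4.
- apply: recolors_within_trans (swap_within _ _) (swap_within _ _);
    by rewrite ?fx ?gy ?gu3; apply: imset_f.
- exists (f u1), (u1 |: [set u2; u3]); split.
  + rewrite subsetI !subUset !sub1set u1j u2j u3j class_h !andbT !inE !eqxx.
    rewrite (negbTE u1u3) (negbTE u1u2) (eq_sym u1 y) (eq_sym u1 x) (eq_sym u2 y).
    by rewrite yu1 xu1 yu2 /= orbT.
  + by rewrite (cardsU1 u1) cards2 !inE negb_or u1u2 u1u3 u2u3.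
  + have yRx : y \in (cclass f (f u1) :\ u1) :\ x by rewrite in_setD1 eq_sym xy yR.
    have R1 : #|(cclass f (f u1) :\ u1) :\ x :\ y| <= 1.
      by have := rest3 u1 u1j; rewrite (cardsD1 x) xR (cardsD1 y) yRx.
    have [p sp] := small_in_part j R1; exists p; apply: subset_trans sp.
    apply/subsetP => w; rewrite in_setD class_h !inE !negb_or => /andP[/and3P[wu1 wu2 wu3]].
    by rewrite (negbTE wu2) (negbTE wu3) /= => /andP[wy /andP[wx fw]]; rewrite wy wx wu1 fw.
Qed.

Lemma anchoring_rainbow : (forall d, #|cclass f d :&: part j| <= 1) ->
  exists g, anchoring j f g.
Proof.
move=> le1.
have injf u v : u \in part j -> v \in part j -> u != v -> f u != f v.
  move=> uj vj uv; apply/negP => /eqP fuv; have := le1 (f u); apply/negP; rewrite -ltnNge.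
  by apply/card_gt1P; exists u, v; rewrite !in_setI uj vj !inE fuv eqxx.
have rest3 u : u \in part j -> #|cclass f (f u) :\ u| <= 3.
  move=> uj; have uQ : u \in cclass f (f u) :&: part j by rewrite in_setI uj andbT inE.
  apply: leq_trans (relaxed_off_part (f_relaxed (f u)) uQ); apply: subset_leq_card.
  apply/subsetP => w /setD1P[wu fw]; rewrite in_setD fw andbT; apply/negP => wj.
  by have := injf w u wj uj wu; rewrite inE in fw; rewrite fw.
have /card_gt2P[u1 [u2 [u3 [uj [n12 n23 n31]]]]] : 2 < #|part j| by rewrite card_part.
have [L1 | /card_gt1P[x [y [xR yR xy]]]] := leqP #|cclass f (f u1) :\ u1| 1.
  by exists (recolor f [set u2; u3] (f u1)); apply: anchoring_rainbow_small.
exists (swap (swap f x u2) y u3); case: uj => u1j u2j u3j.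
by apply: (@anchoring_rainbow_swaps u1 u2 u3 x y) => //; split; apply: injf.
Qed.

Lemma anchoring_exists : exists g, anchoring j f g.
Proof.
have [/existsP[c Q3] | /existsPn le2] := boolP [exists c, 2 < #|cclass f c :&: part j|].
  by exists f; apply: anchoring_big Q3.
have [/existsP[c Q2] | /existsPn le1] := boolP [exists c, 1 < #|cclass f c :&: part j|].
  apply: (@anchoring_pair c) => [|d]; last by rewrite leqNgt le2.
  by apply/eqP; rewrite eqn_leq Q2 leqNgt le2.
by apply: anchoring_rainbow => d; rewrite leqNgt le1.
Qed.

End Anchoring.

Definition shares_triples (i1 i2 : 'I_s) g := exists c (A B : {set T}),
  [/\ #|A| = 3, #|B| = 3, A \subset cclass g c :&: part i1
    & B \subset cclass g c :&: part i2].

Lemma shares_triples_fill g (i1 i2 : 'I_s) c D u : relaxed_coloring g -> i1 != i2 ->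
  3 <= n i2 -> anchored i1 D (cclass g c) -> u \in cclass g c :&: part i2 ->
  exists h, relaxed_coloring h /\ shares_triples i1 i2 h.
Proof.
move=> rg ne12 n2 [sD D3 [p sRp]] /setIP[uc ui2].
have [sDc sDj] : D \subset cclass g c /\ D \subset part i1 by apply/andP; rewrite -subsetI.
have uR : u \in cclass g c :\: D.
  rewrite in_setD uc andbT; apply: contraNN ne12 => /(subsetP sDj).
  by move: ui2; rewrite !inE => /eqP-> /eqP->.
have sR2 : cclass g c :\: D \subset part i2.
  by move: (subsetP sRp u uR) ui2; rewrite !inE => /eqP tp /eqP ti; rewrite -ti tp.
have R3 := rest_card (rg c) sD D3 sRp.
have [D2 [sRD2 sD2 D23]] : exists D2 : {set T},
    [/\ cclass g c :\: D \subset D2, D2 \subset part i2 & #|D2| = 3].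
  by apply: subset_extension sR2 _; rewrite R3 card_part n2.
exists (recolor g D2 c).
have class_c : cclass (recolor g D2 c) c \subset D :|: D2.
  by rewrite cclass_recolor subUset subsetUr -subDset.
split.
- apply: relaxed_recolor => //; rewrite -cclass_recolor.
  by apply: relaxed_two_parts class_c sDj sD2 _ _; rewrite ?D3 ?D23.
- exists c, D, D2; split => //; rewrite subsetI cclass_recolor ?sDj ?sD2 andbT.
    by rewrite subsetU ?sDc ?orbT.
  exact: subsetUl.
Qed.

Lemma shares_triples_exchange g (i1 i2 : 'I_s) c1 c2 D1 D2 : relaxed_coloring g ->
  c1 != c2 -> anchored i1 D1 (cclass g c1) -> anchored i2 D2 (cclass g c2) ->
  exists h, relaxed_coloring h /\ shares_triples i1 i2 h.
Proof.
move=> rg c12 [sD1 D13 [p1 sR1]] [sD2 D23 [p2 sR2]].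
have R13 := rest_card (rg c1) sD1 D13 sR1; have R23 := rest_card (rg c2) sD2 D23 sR2.
have [sD1c sD1j] : D1 \subset cclass g c1 /\ D1 \subset part i1.
  by apply/andP; rewrite -subsetI.
have sD2j : D2 \subset part i2 by move: sD2; rewrite subsetI => /andP[].
set R1 := cclass g c1 :\: D1; set h := recolor (recolor g R1 c2) D2 c1.
have class1 : cclass h c1 = D2 :|: D1.
  by rewrite cclass_recolor cclass_recolor_ne // setDDr setDv set0U (setIidPr sD1c).
have class2 : cclass h c2 \subset R1 :|: (cclass g c2 :\: D2).
  by rewrite cclass_recolor_ne 1?eq_sym // cclass_recolor setDUl setSU // subsetDl.
exists h; split.
- apply: relaxed_coloring_of rg _ => d.
  have [-> | d1] := eqVneq d c1.
    right; rewrite class1.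
    by apply: relaxed_two_parts (subxx _) sD2j sD1j _ _; rewrite ?D13 ?D23.
  have [-> | d2] := eqVneq d c2.
    right; apply: relaxed_subset class2 _.
    exact: relaxed_two_parts (subxx _) sR1 sR2 R13 R23.
  by left; rewrite !cclass_recolor_ne // setDDl subsetDl.
- exists c1, D1, D2; split => //; rewrite class1 subsetI ?sD1j ?sD2j andbT.
    exact: subsetUr.
  exact: subsetUl.
Qed.

Lemma relaxed_shares_triples f (i1 i2 : 'I_s) : relaxed_coloring f -> i1 != i2 ->
  3 <= n i1 -> 3 <= n i2 -> exists g, relaxed_coloring g /\ shares_triples i1 i2 g.
Proof.
move=> rf ne12 n1 n2.
have [g1 [rg1 _ [c1 [D1 a1]]]] := anchoring_exists rf n1.
have [/imsetP[u ui2 c1u] | c1F] := boolP (c1 \in g1 @: part i2).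
  by apply: (@shares_triples_fill g1 i1 i2 c1 D1 u) => //; rewrite in_setI ui2 inE c1u eqxx.
have [g2 [rg2 w2 [c2 [D2 a2]]]] := anchoring_exists rg1 n2.
have c12 : c1 != c2.
  case: a2 => sD2 D23 _; have [v vD2] : exists v, v \in D2 by apply/card_gt0P; rewrite D23.
  case/setIP: (subsetP sD2 v vD2); rewrite inE => /eqP <- vi2.
  by apply: contraNneq c1F => ->; apply: recolors_within_part w2 vi2.
apply: (@shares_triples_exchange g2 i1 i2 c1 c2 D1 D2) => //.
by rewrite (cclass_within w2 c1F).
Qed.

End Colourings.

End CompleteMultipartite.

Lemma ex_least (P : nat -> Prop) m : P m ->
  exists2 k, P k & forall k', P k' -> k <= k'.
Proof.
elim/ltn_ind: m => m IH Pm.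
have [[k' Pk' ltk'] | none] := classic (exists2 k', P k' & k' < m); first exact: IH Pk'.
by exists m => // k' Pk'; rewrite leqNgt; apply/negP => lt; apply: none; exists k'.
Qed.

Theorem lemma5p3 (s : nat) (n : 'I_s -> nat)
  (npos : forall j, 0 < n j)
  (nsorted : forall i j : 'I_s, i <= j -> n j <= n i)
  (nle5 : forall j, n j <= 5)
  (two_big : exists j1 j2 : 'I_s, [/\ j1 != j2, 3 <= n j1 & 3 <= n j2]) :
  forall i1 i2 : 'I_s, val i1 = 0 -> val i2 = 1 ->
  exists k (f : Kvtx n -> 'I_k), optimal3 (@Kadj s n) f /\
    exists (c : 'I_k) (A B : {set Kvtx n}),
      [/\ #|A| = 3, #|B| = 3,
          {in A, forall v, tag v = i1 /\ f v = c} &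
          {in B, forall v, tag v = i2 /\ f v = c}].
Proof.
move=> i1 i2 h1 h2.
have ne12 : i1 != i2 by apply/eqP => e; rewrite e h2 in h1.
have [j ij nj] : exists2 j : 'I_s, val i2 <= j & 3 <= n j.
  case: two_big => j1 [j2 [ne a b]]; rewrite h2.
  have [j10 | ] := posnP j1; last by exists j1.
  exists j2 => //; rewrite lt0n; apply: contraNneq ne => j20.
  by apply/eqP/val_inj; rewrite /= j10 j20.
have n2 := leq_trans nj (nsorted _ _ ij).
have n1 : 3 <= n i1 by apply: leq_trans n2 (nsorted _ _ _); rewrite h1 h2.
have : colorable3 (@Kadj s n) s.
  by exists tag => u; rewrite eq_card0 // => v; rewrite inE /Kadj; case: eqVneq.
case/ex_least => k [f0 rf0] kmin.
have [g [rg [c [A [B [A3 B3 sA sB]]]]]] :=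
  relaxed_shares_triples nle5 (proj1 (relaxed3_Kadj f0) rf0) ne12 n1 n2.
exists k, g; split; first by split; [apply/relaxed3_Kadj | exact: kmin].
exists c, A, B; split => // v; [move/(subsetP sA) | move/(subsetP sB)];
  by rewrite !inE => /andP[/eqP gv /eqP tv].
Qed.
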